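(* Let $A$ be a meet-complemented lattice in which $\Box x$ and $\Diamond x$ exist for every $x\in A$, and let $\{a_i: i\in I\}$ be an arbitrary subset of $A$. Then (i) if both $\bigwedge_{i\in I}a_i$ and $\bigwedge_{i\in I}\Box a_i$ exist, then $\bigwedge_{i\in I}\Box a_i=\Box\bigwedge_{i\in I}a_i$; and (ii) if both $\bigvee_{i\in I}a_i$ and $\bigvee_{i\in I}\Diamond a_i$ exist, then $\bigvee_{i\in I}\Diamond a_i=\Diamond\bigvee_{i\in I}a_i$.
   Context: A meet-complemented lattice is a lattice $(L,\le)$ (not necessarily distributive) such that for every $a\in L$ the element $\neg a=\max\{b\in L: a\wedge b\le c\ \text{for all } c\in L\}$ exists; it is bounded with bottom $0$ and top $1$. For $a\in L$, $\Box a=\max\{b\in L: a\vee\neg b=1\}$ and $\Diamond a=\min\{b\in L: \neg a\vee b=1\}$. *)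

From HB Require Import structures.
From mathcomp Require Import all_boot all_order.
Set Implicit Arguments. Unset Strict Implicit. Unset Printing Implicit Defensive.
Import Order.LTheory.
Local Open Scope order_scope.

Definition is_max {d} {L : porderType d} (P : L -> Prop) (x : L) : Prop :=
  P x /\ forall y, P y -> y <= x.
Definition is_min {d} {L : porderType d} (P : L -> Prop) (x : L) : Prop :=
  P x /\ forall y, P y -> x <= y.

Definition is_inf {d} {L : porderType d} {I : Type} (a : I -> L) (m : L) : Prop :=
  is_max (fun b => forall i, b <= a i) m.
Definition is_sup {d} {L : porderType d} {I : Type} (a : I -> L) (s : L) : Prop :=
  is_min (fun b => forall i, a i <= b) s.

Definition is_neg {d} {L : tbLatticeType d} (a na : L) : Prop :=
  is_max (fun b => forall c, a `&` b <= c) na.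
Definition is_box {d} {L : tbLatticeType d} (neg : L -> L) (a ba : L) : Prop :=
  is_max (fun b => a `|` neg b = \top) ba.
Definition is_diamond {d} {L : tbLatticeType d} (neg : L -> L) (a da : L) : Prop :=
  is_min (fun b => neg a `|` b = \top) da.

(** Since [neg a `|` b = \top] is symmetric up to [joinC], [dia a <= b] and
    [a <= box b] are both equivalent to it: [dia] is left adjoint to [box].
    A right adjoint preserves every existing infimum and a left adjoint every
    existing supremum, and infima and suprema are unique. *)

From HB Require Import structures.
From mathcomp Require Import all_boot all_order.
Import Order.LTheory.
Local Open Scope order_scope.

Lemma is_max_unique {d} {L : porderType d} (P : L -> Prop) (x y : L) :
  is_max P x -> is_max P y -> x = y.
Proof. by move=> [Px maxx] [Py maxy]; apply: le_anti; rewrite maxx ?maxy. Qed.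

Lemma is_min_unique {d} {L : porderType d} (P : L -> Prop) (x y : L) :
  is_min P x -> is_min P y -> x = y.
Proof. by move=> [Px minx] [Py miny]; apply: le_anti; rewrite minx ?miny. Qed.

Section GaloisConnection.
Context {d1 d2 : Order.disp_t} {L1 : porderType d1} {L2 : porderType d2}.
Context {f : L1 -> L2} {g : L2 -> L1}.
Hypothesis fg_adjoint : forall x y, f x <= y <-> x <= g y.

Lemma adjoint_homo_right : {homo g : x y / x <= y}.
Proof. by move=> x y xy; apply/fg_adjoint/(le_trans _ xy)/fg_adjoint. Qed.

Lemma adjoint_homo_left : {homo f : x y / x <= y}.
Proof. by move=> x y xy; apply/fg_adjoint/(le_trans xy)/fg_adjoint. Qed.

Lemma is_inf_adjoint_right {I : Type} (a : I -> L2) (m : L2) :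
  is_inf a m -> is_inf (g \o a) (g m).
Proof.
move=> [lb_m glb_m]; split=> [i | b lb_b] /=; first exact: adjoint_homo_right.
by apply/fg_adjoint/glb_m => i; apply/fg_adjoint/lb_b.
Qed.

Lemma is_sup_adjoint_left {I : Type} (a : I -> L1) (s : L1) :
  is_sup a s -> is_sup (f \o a) (f s).
Proof.
move=> [ub_s lub_s]; split=> [i | b ub_b] /=; first exact: adjoint_homo_left.
by apply/fg_adjoint/lub_s => i; apply/fg_adjoint/ub_b.
Qed.

End GaloisConnection.

Section ModalOperators.
Context {d : Order.disp_t} {L : tbLatticeType d} {neg box dia : L -> L}.
Hypothesis hneg : forall x : L, is_neg x (neg x).
Hypothesis hbox : forall x : L, is_box neg x (box x).
Hypothesis hdia : forall x : L, is_diamond neg x (dia x).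

Lemma neg_antitone : {homo neg : x y /~ x <= y}.
Proof.
move=> x y xy; apply: (proj2 (hneg y)) => c.
by apply: le_trans (proj1 (hneg x) c); rewrite leI2.
Qed.

Lemma le_box (a b : L) : b <= box a <-> a `|` neg b = \top.
Proof.
split=> [b_le | ]; last exact: (proj2 (hbox a)).
apply: le_anti; rewrite lex1 -(proj1 (hbox a)) leU2 //.
exact: neg_antitone.
Qed.

Lemma dia_le (a b : L) : dia a <= b <-> neg a `|` b = \top.
Proof.
split=> [le_b | ]; last exact: (proj2 (hdia a)).
by apply: le_anti; rewrite lex1 -(proj1 (hdia a)) leU2.
Qed.

Lemma dia_box_adjoint (a b : L) : dia a <= b <-> a <= box b.
Proof.
split=> [/(dia_le a b) | /(le_box b a)]; rewrite joinC => top_eq.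
- exact/(le_box b a).
- exact/(dia_le a b).
Qed.

End ModalOperators.

Theorem proposition10 (d : Order.disp_t) (L : tbLatticeType d)
  (neg box dia : L -> L)
  (hneg : forall x : L, is_neg x (neg x))
  (hbox : forall x : L, is_box neg x (box x))
  (hdia : forall x : L, is_diamond neg x (dia x))
  (I : Type) (a : I -> L) :
  (forall m mb : L, is_inf a m -> is_inf (fun i => box (a i)) mb -> mb = box m) /\
  (forall s sd : L, is_sup a s -> is_sup (fun i => dia (a i)) sd -> sd = dia s).
Proof.
have adj := dia_box_adjoint hneg hbox hdia.
split=> [m mb inf_m inf_mb | s sd sup_s sup_sd].
- exact: is_max_unique inf_mb (is_inf_adjoint_right adj a m inf_m).
- exact: is_min_unique sup_sd (is_sup_adjoint_left adj a s sup_s).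
Qed.
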